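(* Let $D=(V,A)$ be a directed graph with $n=|V|$, $r\in V$, and let $(x,f)$ be a feasible solution of (Const-DRAT). Let $S=\{v:x_v>0\}$, $S_1=\{v\in S:x_v\ge n^{-1/3}\}$, $U=\{v\in S:x_v\ge n^{-2/3}\}$, $U'=S\setminus U$, and let $EX$ be the set of $v\in S_1$ such that there is no directed path from $r$ to $v$ in $D[U]$. For $v\in EX$ let $X_v$ be the set of $w\in U'$ such that there is a directed path from $w$ to $v$ in $D[U\cup\{w\}]$. Then $|X_v|\ge n^{1/3}$ for every $v\in EX$.
   Context: $\mathcal P_v$ is the set of simple directed paths from $r$ to $v$. (Const-DRAT), with node costs $c_v\ge0$, prizes $p_v\ge0$ and parameters $B,Q$: $\sum_v x_vp_v\ge Q$; $\sum_v x_vc_v\le B$; $\sum_{P\in\mathcal P_v}f^v_P=x_v$ ($v\ne r$); $\sum_{P\in\mathcal P_v:w\in P}f^v_P\le x_w$ ($v\ne r$, $w\ne v$); $0\le x_v\le1$; $0\le f^v_P\le1$. $D[W]$ denotes the induced subgraph. *)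

From HB Require Import structures.
From mathcomp Require Import all_boot all_order all_algebra.
From mathcomp Require Import reals exp.
Set Implicit Arguments. Unset Strict Implicit. Unset Printing Implicit Defensive.
Import Order.TTheory GRing.Theory Num.Theory.
Local Open Scope ring_scope.

Definition is_rpath (V : finType) (A : rel V) (r v : V) (s : seq V) : bool :=
  if s is a :: t then [&& a == r, path A r t, last r t == v & uniq s] else false.

(* Sum of F over the (finite) set P_v of simple directed r-v paths:
   every simple path has at most #|V| vertices, so we sum over tuples of each
   length k <= #|V| satisfying is_rpath. *)
Definition psum (R : realType) (V : finType) (A : rel V) (r v : V)
    (F : seq V -> R) : R :=
  \sum_(k < #|V|.+1) \sum_(t : k.-tuple V | is_rpath A r v t) F t.

Definition const_drat_feasible (R : realType) (V : finType) (A : rel V) (r : V)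
    (c p : V -> R) (B Q : R) (x : V -> R) (f : V -> seq V -> R) : Prop :=
  [/\ \sum_(v : V) x v * p v >= Q,
      \sum_(v : V) x v * c v <= B &
   [/\ (forall v, v != r -> psum A r v (f v) = x v),
      (forall v w, v != r -> w != v ->
          psum A r v (fun P => if w \in P then f v P else 0) <= x w),
      (forall v, 0 <= x v <= 1) &
      (forall v P, is_rpath A r v P -> 0 <= f v P <= 1)]].

Definition reach_in (V : finType) (A : rel V) (W : {set V}) (a b : V) : bool :=
  [&& a \in W, b \in W &
      connect [rel u w | [&& A u w, u \in W & w \in W]] a b].

From HB Require Import structures.
From mathcomp Require Import all_boot all_order all_algebra.
From mathcomp Require Import reals exp.
From mathcomp Require Import lra.
Set Implicit Arguments. Unset Strict Implicit. Unset Printing Implicit Defensive.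
Import Order.TTheory GRing.Theory Num.Theory.
Local Open Scope ring_scope.

(* Every simple r-v path either runs inside D[U], which is excluded for v in
   EX, or has a last vertex w outside U; the tail from w is a path in
   D[U + w], so w lies in X_v.  Hence X_v (together with the vertices outside
   S, which carry no weight) is an r-v cut, and the flow constraints give
   x_v <= sum_(w in X_v) x_w <= |X_v| n^(-2/3).  Since x_v >= n^(-1/3), we get
   |X_v| >= n^(1/3). *)

Section InducedPaths.

Variables (V : finType) (A : rel V).

Lemma path_induced (W : {set V}) a s :
  a \in W -> all [in W] s -> path A a s ->
  path [rel u w | [&& A u w, u \in W & w \in W]] a s.
Proof.
elim: s a => [//|b s IHs] a aW /= /andP[bW sW] /andP[ab bs].
by rewrite ab aW bW IHs.
Qed.

Lemma reach_in_path (W : {set V}) a s :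
  a \in W -> all [in W] s -> path A a s -> reach_in A W a (last a s).
Proof.
move=> aW sW as_; rewrite /reach_in aW.
have -> : last a s \in W.
  by case: s sW {as_} => [//|b s] /allP; apply; rewrite /= mem_last.
by apply/connectP; exists s => //; apply: path_induced.
Qed.

Lemma path_inside_or_last_exit (U : {set V}) v s a :
  v \in U -> path A a s -> last a s = v ->
  all [in U] (a :: s) \/
  exists2 w, w \in a :: s & (w \notin U) && reach_in A (w |: U) w v.
Proof.
move=> vU; elim: s a => [|b s IHs] a /=; first by move=> _ ->; left; rewrite vU.
move=> /andP[ab bs] ls; have [inU | [w ws wP]] := IHs b bs ls; last first.
  by right; exists w => //; rewrite inE ws orbT.
have [aU | aU] := boolP (a \in U); first by left; apply/andP.
right; exists a; first exact: mem_head.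
rewrite aU -ls; apply: (@reach_in_path _ a (b :: s)); first exact: setU11.
- by apply/allP=> y ys; rewrite inE (allP inU y ys) orbT.
- by rewrite /= ab.
Qed.

Lemma rpath_meets_last_exits (U : {set V}) r v s :
  v \in U -> ~~ reach_in A U r v -> is_rpath A r v s ->
  exists2 w, w \in s & (w \notin U) && reach_in A (w |: U) w v.
Proof.
move=> vU noreach; case: s => [//|a s] /and4P[/eqP -> rs /eqP ls _].
have [/andP[rU sU] | //] := path_inside_or_last_exit vU rs ls.
by move: noreach; rewrite -ls reach_in_path.
Qed.

End InducedPaths.

Lemma flow_cut_bound (R : realType) (V : finType) (A : rel V) (r v : V)
    (x : V -> R) (fv : seq V -> R) (W : {set V}) :
  psum A r v fv = x v ->
  (forall w, w \in W -> psum A r v (fun P => if w \in P then fv P else 0) <= x w) ->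
  (forall P, is_rpath A r v P -> 0 <= fv P) ->
  (forall P, is_rpath A r v P -> exists2 w, w \in P & w \in W) ->
  x v <= \sum_(w in W) x w.
Proof.
move=> flow_v cap fv_ge0 cut; rewrite -flow_v /psum.
apply: (@le_trans _ _ (\sum_(k < #|V|.+1) \sum_(t : k.-tuple V | is_rpath A r v t)
    \sum_(w in W) (if w \in (t : seq V) then fv t else 0))).
  apply: ler_sum => k _; apply: ler_sum => t tP.
  have [w wt wW] := cut t tP.
  rewrite (bigD1 w) //= wt lerDl; apply: sumr_ge0 => u _.
  by case: ifP => // _; apply: fv_ge0.
under eq_bigr => k _ do rewrite exchange_big.
by rewrite exchange_big; apply: ler_sum.
Qed.

Lemma sum_le_card_pos_mul (R : realDomainType) (T : finType) (W : {set T})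
    (x : T -> R) (N : R) :
  (forall w, w \in W -> 0 < x w -> x w <= N) ->
  \sum_(w in W) x w <= #|[set w in W | 0 < x w]|%:R * N.
Proof.
move=> xN; apply: (@le_trans _ _ (\sum_(w in W) (if 0 < x w then N else 0))).
  by apply: ler_sum => w wW; case: ltP => // /(xN w wW).
rewrite -big_mkcondr (eq_bigl [in [set w in W | 0 < x w]]) => [|w]; last by rewrite inE.
by rewrite sumr_const mulr_natl.
Qed.

Theorem claim2 (R : realType) (V : finType) (A : rel V) (r : V)
    (c p : V -> R) (B Q : R) (x : V -> R) (f : V -> seq V -> R) :
  (forall v, 0 <= c v) -> (forall v, 0 <= p v) ->
  const_drat_feasible A r c p B Q x f ->
  let n : R := #|V|%:R in
  let S := [set v | 0 < x v] in
  let S1 := [set v in S | n `^ (- 3^-1) <= x v] in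
  let U := [set v in S | n `^ (- (2 / 3)) <= x v] in
  let U' := S :\: U in
  let EX := [set v in S1 | ~~ reach_in A U r v] in
  forall v, v \in EX ->
    let X := [set w in U' | reach_in A (w |: U) w v] in
    n `^ 3^-1 <= #|X|%:R.
Proof.
move=> _ _ [_ _ [flow cap _ f_bounds]] n S S1 U U' EX v vEX /=.
have n_ge1 : 1 <= n by rewrite ler1n; apply/card_gt0P; exists v.
set N := n `^ (- (2 / 3)).
have N_gt0 : 0 < N by apply: powR_gt0; lra.
move: vEX; rewrite !inE => /andP[/andP[xv_gt0 xv_ge_N3] noreach].
have vU : v \in U by rewrite !inE xv_gt0 (le_trans _ xv_ge_N3) ?ler_powR //; lra.
have vr : v != r by apply: contraNneq noreach => <-; rewrite /reach_in vU connect0.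
pose X' := [set w | (w \notin U) && reach_in A (w |: U) w v].
have xv_le : x v <= \sum_(w in X') x w.
  apply: flow_cut_bound (flow v vr) _ _ _.
  - move=> w; rewrite inE => /andP[wU _]; apply: cap => //.
    by apply: contraNneq wU => ->.
  - by move=> P /(f_bounds v) /andP[].
  - move=> P /(rpath_meets_last_exits vU noreach) [w wP wX'].
    by exists w; rewrite // inE.
have -> : [set w in U' | reach_in A (w |: U) w v] = [set w in X' | 0 < x w].
  by apply/setP => w; rewrite !inE andbAC.
have sum_le : \sum_(w in X') x w <= #|[set w in X' | 0 < x w]|%:R * N.
  apply: sum_le_card_pos_mul => w; rewrite !inE => /andP[wU _] xw_gt0.
  by move: wU; rewrite xw_gt0 -ltNge => /ltW.
have cbrt_mulN : n `^ 3^-1 * N = n `^ (- 3^-1).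
  rewrite -powRD; first by congr (_ `^ _); lra.
  by apply/implyP => _; rewrite gt_eqF // (lt_le_trans _ n_ge1).
by rewrite -(ler_pM2r N_gt0) cbrt_mulN (le_trans xv_ge_N3 (le_trans xv_le sum_le)).
Qed.
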